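(* Let $\bm A=(A_1,\dots,A_d)$ be Hermitian matrices in $M_n(\mathbb{C})$, $B\in M_n(\mathbb{C})$, and $(\bm\lambda,\nu)\in\mathbb{R}^d\times\mathbb{C}$. Then $$\left|\dot\mu^{C}_{(\bm\lambda,\nu)}(\bm A,B)-\mu^{Q}_{(\bm\lambda,\nu)}(\bm A,B)\right|\le\sqrt{\sum_{i<j}\|[A_i,A_j]\|+\|F_{(\bm\lambda,\nu)}(\bm A,B)\|}.$$
   Context: Let $n,d,m$ be positive integers. Fix Hermitian matrices $\Gamma_1,\dots,\Gamma_d\in M_{2m}(\mathbb{C})$ with $\Gamma_i^2=I_{2m}$ and $\Gamma_i\Gamma_j=-\Gamma_j\Gamma_i$ for $i\neq j$ (a Clifford representation; the paper uses a specific one built from Pauli matrices). Write $P=\begin{bmatrix} I_m&0\\0&0_m\end{bmatrix}$ and $Q=\begin{bmatrix}0_m&0\\0&I_m\end{bmatrix}$ in $M_{2m}(\mathbb{C})$. For a $d$-tuple $\bm A=(A_1,\dots,A_d)$ of Hermitian matrices in $M_n(\mathbb{C})$, a matrix $B\in M_n(\mathbb{C})$ (not necessarily Hermitian or normal), and a probe site $(\bm\lambda,\nu)\in\mathbb{R}^d\times\mathbb{C}$, the non-Hermitian spectral localizer is $$L_{(\bm\lambda,\nu)}(\bm A,B)=\sum_{i=1}^d (A_i-\lambda_i I)\otimes\Gamma_i+(B-\nu I)\otimes P-(B-\nu I)^\dagger\otimes Q\in M_{2mn}(\mathbb{C}).$$ The Clifford radial gap is $\dot\mu^{C}_{(\bm\lambda,\nu)}(\bm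 A,B)=\sigma_{\min}\big(L_{(\bm\lambda,\nu)}(\bm A,B)\big)$. Define $$F_{(\bm\lambda,\nu)}(\bm A,B)=\sum_{i=1}^d\big(G_i+G_i^\dagger\big)-\sum_{i=1}^d\big(H_i+H_i^\dagger\big),\quad G_i=(A_i-\lambda_i I)(B-\nu I)\otimes\Gamma_iP,\quad H_i=(A_i-\lambda_i I)(B-\nu I)^\dagger\otimes\Gamma_iQ.$$ The quadratic gap (with one non-Hermitian matrix) is $\mu^{Q}_{(\bm\lambda,\nu)}(\bm A,B)=\sqrt{\lambda_{\min}(Q_{(\bm\lambda,\nu)}(\bm A,B))}$, where $Q_{(\bm\lambda,\nu)}(\bm A,B)=RQ\otimes\begin{bmatrix}1&0\\0&0\end{bmatrix}+LQ\otimes\begin{bmatrix}0&0\\0&1\end{bmatrix}$ with $RQ=\sum_{i=1}^d(A_i-\lambda_iI)^2+(B-\nu I)^\dagger(B-\nu I)$ and $LQ=\sum_{i=1}^d(A_i-\lambda_iI)^2+(B-\nu I)(B-\nu I)^\dagger$. Matrix norms are operator norms. *)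

From HB Require Import structures.
From mathcomp Require Import all_boot all_order all_algebra.
From mathcomp Require Import classical_sets reals.
From mathcomp Require Import complex mxtens.
Set Implicit Arguments. Unset Strict Implicit. Unset Printing Implicit Defensive.
Import Order.TTheory GRing.Theory Num.Theory.
Local Open Scope ring_scope.
Local Open Scope classical_set_scope.

Section Defs.
Variable R : realType.
Local Notation C := R[i].

Definition mxadj {k l : nat} (M : 'M[C]_(k, l)) : 'M[C]_(l, k) :=
  (map_mx (@conjc R) M)^T.

Definition is_hermitian {k : nat} (M : 'M[C]_k) : Prop := mxadj M = M.

Definition vnorm {k : nat} (x : 'cV[C]_k) : R :=
  Num.sqrt (\sum_(i < k) (Normc.normc (x i 0)) ^+ 2).

Definition opnorm {k l : nat} (M : 'M[C]_(k, l)) : R :=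
  sup [set vnorm (M *m x) | x in [set x : 'cV[C]_l | vnorm x = 1]].

Definition lambda_min {k : nat} (M : 'M[C]_k) : R :=
  inf [set r : R | eigenvalue M (r%:C)%C].

Definition sigma_min {k : nat} (M : 'M[C]_k) : R :=
  Num.sqrt (lambda_min (mxadj M *m M)).

Definition projP (m : nat) : 'M[C]_(m + m) := block_mx 1%:M 0 0 0.
Definition projQ (m : nat) : 'M[C]_(m + m) := block_mx 0 0 0 1%:M.

Definition is_clifford (d m : nat) (Gamma : 'I_d -> 'M[C]_(m + m)) : Prop :=
  (forall i, is_hermitian (Gamma i)) /\
  (forall i, Gamma i *m Gamma i = 1%:M) /\
  (forall i j, i != j -> Gamma i *m Gamma j = - (Gamma j *m Gamma i)).

Definition shiftA {n d : nat} (A : 'I_d -> 'M[C]_n) (lam : 'I_d -> R)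
  (i : 'I_d) : 'M[C]_n := A i - ((lam i)%:C)%C%:M.

Definition shiftB {n : nat} (B : 'M[C]_n) (nu : C) : 'M[C]_n := B - nu%:M.

Definition localizer {n d m : nat} (Gamma : 'I_d -> 'M[C]_(m + m))
  (A : 'I_d -> 'M[C]_n) (B : 'M[C]_n) (lam : 'I_d -> R) (nu : C)
  : 'M[C]_(n * (m + m)) :=
  \sum_(i < d) (shiftA A lam i *t Gamma i)
  + (shiftB B nu *t projP m) - (mxadj (shiftB B nu) *t projQ m).

Definition clifford_gap {n d m : nat} (Gamma : 'I_d -> 'M[C]_(m + m))
  (A : 'I_d -> 'M[C]_n) (B : 'M[C]_n) (lam : 'I_d -> R) (nu : C) : R :=
  sigma_min (localizer Gamma A B lam nu).

Definition Fmat {n d m : nat} (Gamma : 'I_d -> 'M[C]_(m + m))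
  (A : 'I_d -> 'M[C]_n) (B : 'M[C]_n) (lam : 'I_d -> R) (nu : C)
  : 'M[C]_(n * (m + m)) :=
  let G i := (shiftA A lam i *m shiftB B nu) *t (Gamma i *m projP m) in
  let H i := (shiftA A lam i *m mxadj (shiftB B nu)) *t (Gamma i *m projQ m) in
  \sum_(i < d) (G i + mxadj (G i)) - \sum_(i < d) (H i + mxadj (H i)).

Definition RQ {n d : nat} (A : 'I_d -> 'M[C]_n) (B : 'M[C]_n)
  (lam : 'I_d -> R) (nu : C) : 'M[C]_n :=
  \sum_(i < d) (shiftA A lam i *m shiftA A lam i)
  + mxadj (shiftB B nu) *m shiftB B nu.

Definition LQ {n d : nat} (A : 'I_d -> 'M[C]_n) (B : 'M[C]_n)
  (lam : 'I_d -> R) (nu : C) : 'M[C]_n :=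
  \sum_(i < d) (shiftA A lam i *m shiftA A lam i)
  + shiftB B nu *m mxadj (shiftB B nu).

Definition Qmat {n d : nat} (A : 'I_d -> 'M[C]_n) (B : 'M[C]_n)
  (lam : 'I_d -> R) (nu : C) : 'M[C]_(n * 2) :=
  RQ A B lam nu *t (delta_mx 0 0 : 'M[C]_2)
  + LQ A B lam nu *t (delta_mx 1 1 : 'M[C]_2).

Definition quadratic_gap {n d : nat} (A : 'I_d -> 'M[C]_n) (B : 'M[C]_n)
  (lam : 'I_d -> R) (nu : C) : R :=
  Num.sqrt (lambda_min (Qmat A B lam nu)).

End Defs.

(* Write a_i = A_i - lam_i, b = B - nu, S = sum_i a_i (x) Gamma_i and T = b (x) P - b^* (x) Q,
   so that the localizer is L = S + T.  The Clifford relations give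
     L^* L = (RQ (x) P + LQ (x) Q) + sum_(k<l) [A_k, A_l] (x) Gamma_k Gamma_l + F,
   with F = S T + (S T)^*.  The first summand is block diagonal with the same least eigenvalue
   as the quadratic-gap matrix; on unit vectors the quadratic forms of the other two are bounded
   by sum_(k<l) ||[A_k, A_l]|| + ||F||, each Gamma_k Gamma_l being unitary.  Since
   lambda_min is the minimum of the Rayleigh quotient, lambda_min (L^* L) = sigma_min(L)^2 and
   lambda_min of the quadratic-gap matrix differ by at most that bound, and
   |sqrt a - sqrt b| <= sqrt |a - b| concludes. *)

From mathcomp Require Import all_boot all_order all_algebra.
From mathcomp Require Import classical_sets reals.
From mathcomp Require Import complex mxtens.
From mathcomp Require Import spectral sesquilinear.
From mathcomp Require Import ring lra.
Import Order.TTheory GRing.Theory Num.Theory.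
Local Open Scope ring_scope.
Set Implicit Arguments. Unset Strict Implicit. Unset Printing Implicit Defensive.

Lemma sumr_diag_pairs (V : zmodType) d (f : 'I_d -> 'I_d -> V) :
  \sum_i \sum_j f i j =
  \sum_i f i i + \sum_(k < d) \sum_(l < d | (k < l)%N) (f k l + f l k).
Proof.
have split_row (i : 'I_d) : \sum_j f i j =
    f i i + \sum_(j < d | (i < j)%N) f i j + \sum_(j < d | (j < i)%N) f i j.
  rewrite [LHS](bigID (fun j : 'I_d => (i < j)%N)) /= addrC (bigD1 i) /=; last by rewrite ltnn.
  rewrite -addrA [X in _ + X = _]addrC addrA; congr (_ + _ + _).
  by apply: eq_bigl => j; rewrite -leqNgt ltn_neqAle andbC.
rewrite (eq_bigr _ (fun i _ => split_row i)) !big_split /= -addrA; congr (_ + _).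
rewrite [X in _ + X](exchange_big_dep xpredT) //= -big_split /=.
by apply: eq_bigr => k _; rewrite big_split.
Qed.

Lemma sum_mxtens (V : nmodType) k p (F : 'I_(k * p) -> V) :
  \sum_i F i = \sum_(a < k) \sum_(b < p) F (mxtens_index (a, b)).
Proof.
rewrite pair_big /= (reindex (@mxtens_index k p)) /=; last first.
  by exists (@mxtens_unindex k p) => x _; rewrite ?mxtens_indexK ?mxtens_unindexK.
by apply: eq_bigr => -[a b] _.
Qed.

Section CommutatorShift.
Variables (R : comPzRingType) (n : nat).

Lemma commutator_shiftl (X Y : 'M[R]_n) c :
  (X - c%:M) *m Y - Y *m (X - c%:M) = X *m Y - Y *m X.
Proof. by rewrite mulmxBl mulmxBr scalar_mxC opprB addrA subrK. Qed.

Lemma commutator_shiftr (X Y : 'M[R]_n) c :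
  X *m (Y - c%:M) - (Y - c%:M) *m X = X *m Y - Y *m X.
Proof. by rewrite mulmxBl mulmxBr scalar_mxC opprB addrA subrK. Qed.

End CommutatorShift.

Lemma ler_norm_sqrtrB (R : rcfType) (a b s : R) :
  `|a - b| <= s -> `|Num.sqrt a - Num.sqrt b| <= Num.sqrt s.
Proof.
move=> ab_le; have s_ge0 : 0 <= s := le_trans (normr_ge0 _) ab_le.
rewrite -sqrtr_sqr ler_sqrt //; move: ab_le; rewrite ler_norml => /andP[? ?].
have := sqrtr_ge0 a; have := sqrtr_ge0 b.
have [a_ge0|a_lt0] := lerP 0 a; have [b_ge0|b_lt0] := lerP 0 b.
- (* (sqrt a - sqrt b)^2 <= |sqrt a - sqrt b| (sqrt a + sqrt b) = |a - b| *)
  have := sqr_sqrtr a_ge0; have := sqr_sqrtr b_ge0.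
  by have [|] := lerP (Num.sqrt a) (Num.sqrt b); nra.
- by rewrite (ler0_sqrtr (ltW b_lt0)); have := sqr_sqrtr a_ge0; nra.
- by rewrite (ler0_sqrtr (ltW a_lt0)); have := sqr_sqrtr b_ge0; nra.
- by rewrite (ler0_sqrtr (ltW a_lt0)) (ler0_sqrtr (ltW b_lt0)); nra.
Qed.

Section ComplexMatrices.
Variable R : realType.
Local Notation C := R[i].

Lemma mxadjE k l (M : 'M[C]_(k, l)) i j : mxadj M i j = conjc (M j i).
Proof. by rewrite !mxE. Qed.

Lemma mxadjE_conj k l (M : 'M[C]_(k, l)) : mxadj M = map_mx Num.conj M^T.
Proof. by rewrite /mxadj map_trmx. Qed.

Lemma mxadjK k l (M : 'M[C]_(k, l)) : mxadj (mxadj M) = M.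
Proof. by apply/matrixP=> i j; rewrite !mxadjE conjcK. Qed.

Lemma mxadjD k l (M N : 'M[C]_(k, l)) : mxadj (M + N) = mxadj M + mxadj N.
Proof. by apply/matrixP=> i j; rewrite !mxE rmorphD. Qed.

Lemma mxadj0 k l : mxadj (0 : 'M[C]_(k, l)) = 0.
Proof. by apply/matrixP=> i j; rewrite !mxE conjc0. Qed.

Lemma mxadjN k l (M : 'M[C]_(k, l)) : mxadj (- M) = - mxadj M.
Proof. by apply/matrixP=> i j; rewrite !mxE rmorphN. Qed.

Lemma mxadjB k l (M N : 'M[C]_(k, l)) : mxadj (M - N) = mxadj M - mxadj N.
Proof. by rewrite mxadjD mxadjN. Qed.

Lemma mxadj_sum k l (I : finType) (P : pred I) (F : I -> 'M[C]_(k, l)) :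
  mxadj (\sum_(i | P i) F i) = \sum_(i | P i) mxadj (F i).
Proof. exact: (big_morph _ (@mxadjD k l) (@mxadj0 k l)). Qed.

Lemma mxadjZ k l (a : C) (M : 'M[C]_(k, l)) : mxadj (a *: M) = conjc a *: mxadj M.
Proof. by apply/matrixP=> i j; rewrite !mxE rmorphM. Qed.

Lemma mxadjM k l p (M : 'M[C]_(k, l)) (N : 'M[C]_(l, p)) :
  mxadj (M *m N) = mxadj N *m mxadj M.
Proof.
apply/matrixP=> i j; rewrite !mxE rmorph_sum; apply: eq_bigr=> r _.
by rewrite !mxadjE rmorphM mulrC.
Qed.

Lemma mxadj_scalar k (c : C) : mxadj (c%:M : 'M[C]_k) = (conjc c)%:M.
Proof. by apply/matrixP=> i j; rewrite !mxE rmorphMn eq_sym. Qed.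

Lemma mxadj1 k : mxadj (1%:M : 'M[C]_k) = 1%:M.
Proof. by rewrite mxadj_scalar conjc1. Qed.

Lemma mxadj_delta p (j : 'I_p) : mxadj (delta_mx j j : 'M[C]_p) = delta_mx j j.
Proof. by apply/matrixP=> k l; rewrite !mxE conjc_nat andbC. Qed.

Lemma mxadj_block k l (M : 'M[C]_k) (N : 'M[C]_l) :
  mxadj (block_mx M 0 0 N) = block_mx (mxadj M) 0 0 (mxadj N).
Proof. by rewrite /mxadj map_block_mx tr_block_mx !map_mx0 !trmx0. Qed.

Lemma mxadj_tens k l p q (M : 'M[C]_(k, l)) (N : 'M[C]_(p, q)) :
  mxadj (M *t N) = mxadj M *t mxadj N.
Proof.
apply/matrixP=> i j.
case: (mxtens_indexP i)=> i0 i1; case: (mxtens_indexP j)=> j0 j1.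
by rewrite mxadjE !tensmxE !mxadjE rmorphM.
Qed.

Lemma tensmxDl k l p q (M1 M2 : 'M[C]_(k, l)) (N : 'M[C]_(p, q)) :
  (M1 + M2) *t N = M1 *t N + M2 *t N.
Proof.
apply/matrixP=> i j.
case: (mxtens_indexP i)=> i0 i1; case: (mxtens_indexP j)=> j0 j1.
by rewrite tensmxE [in RHS]mxE !tensmxE mxE mulrDl.
Qed.

Lemma tensmxDr k l p q (M : 'M[C]_(k, l)) (N1 N2 : 'M[C]_(p, q)) :
  M *t (N1 + N2) = M *t N1 + M *t N2.
Proof.
apply/matrixP=> i j.
case: (mxtens_indexP i)=> i0 i1; case: (mxtens_indexP j)=> j0 j1.
by rewrite tensmxE [in RHS]mxE !tensmxE mxE mulrDr.
Qed.

Lemma tensmxNl k l p q (M : 'M[C]_(k, l)) (N : 'M[C]_(p, q)) :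
  (- M) *t N = - (M *t N).
Proof.
apply/matrixP=> i j.
case: (mxtens_indexP i)=> i0 i1; case: (mxtens_indexP j)=> j0 j1.
by rewrite tensmxE [in RHS]mxE !tensmxE mxE mulNr.
Qed.

Lemma tensmxNr k l p q (M : 'M[C]_(k, l)) (N : 'M[C]_(p, q)) :
  M *t (- N) = - (M *t N).
Proof.
apply/matrixP=> i j.
case: (mxtens_indexP i)=> i0 i1; case: (mxtens_indexP j)=> j0 j1.
by rewrite tensmxE [in RHS]mxE !tensmxE mxE mulrN.
Qed.

Lemma tensmx_suml k l p q (I : finType) (P : pred I) (F : I -> 'M[C]_(k, l))
    (N : 'M[C]_(p, q)) :
  (\sum_(i | P i) F i) *t N = \sum_(i | P i) (F i *t N).
Proof.
apply: (big_morph (fun M => M *t N)); first by move=> ? ?; exact: tensmxDl.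
exact: tens0mx.
Qed.

Lemma tensmx11 k l : (1%:M : 'M[C]_k) *t (1%:M : 'M[C]_l) = 1%:M.
Proof.
apply/matrixP=> i j.
case: (mxtens_indexP i)=> i0 i1; case: (mxtens_indexP j)=> j0 j1.
rewrite tensmxE !mxE (can_eq (@mxtens_indexK k l)) xpair_eqE.
by rewrite -natrM mulnb.
Qed.

Definition cdot k (x y : 'cV[C]_k) : C := (mxadj x *m y) 0 0.
Definition sqnorm k (x : 'cV[C]_k) : R := complex.Re (cdot x x).
Definition qform k (M : 'M[C]_k) (x : 'cV[C]_k) : R := complex.Re (cdot x (M *m x)).

Lemma cdotE k (x y : 'cV[C]_k) : cdot x y = \sum_i conjc (x i 0) * y i 0.
Proof. by rewrite /cdot mxE; apply: eq_bigr => i _; rewrite mxadjE. Qed.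

Lemma cdotZr k (x y : 'cV[C]_k) a : cdot x (a *: y) = a * cdot x y.
Proof. by rewrite /cdot -scalemxAr mxE. Qed.

Lemma cdot_adjmul k l (N : 'M[C]_(l, k)) x y : cdot x (mxadj N *m y) = cdot (N *m x) y.
Proof. by rewrite /cdot mxadjM mulmxA. Qed.

Lemma sqnormE k (x : 'cV[C]_k) :
  sqnorm x = \sum_i (complex.Re (x i 0) ^+ 2 + complex.Im (x i 0) ^+ 2).
Proof.
rewrite /sqnorm cdotE raddf_sum; apply: eq_bigr => i _.
by case: (x i 0) => a b /=; ring.
Qed.

Lemma sqnorm_ge0 k (x : 'cV[C]_k) : 0 <= sqnorm x.
Proof. by rewrite sqnormE sumr_ge0 // => i _; rewrite addr_ge0 ?sqr_ge0. Qed.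

Lemma sqnorm_eq0 k (x : 'cV[C]_k) : sqnorm x = 0 -> x = 0.
Proof.
rewrite sqnormE => /eqP; rewrite psumr_eq0 => [/allP x0|i _]; last first.
  by rewrite addr_ge0 ?sqr_ge0.
apply/matrixP => i j; rewrite [j]ord1 mxE.
move/implyP: (x0 i (mem_index_enum _)) => /(_ isT).
rewrite paddr_eq0 ?sqr_ge0 // !sqrf_eq0.
by case: (x i 0) => a b /= /andP[/eqP -> /eqP ->].
Qed.

Lemma sqnorm0 k : sqnorm (0 : 'cV[C]_k) = 0.
Proof. by rewrite sqnormE big1 // => i _; rewrite mxE expr0n addr0. Qed.

Lemma sqnormZ k (c : R) (x : 'cV[C]_k) : sqnorm ((c%:C)%C *: x) = c ^+ 2 * sqnorm x.
Proof.
rewrite !sqnormE mulr_sumr; apply: eq_bigr => i _; rewrite mxE.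
by case: (x i 0) => a b /=; ring.
Qed.

Lemma sqnorm_delta k (j : 'I_k) : sqnorm (delta_mx j 0 : 'cV[C]_k) = 1.
Proof.
rewrite sqnormE (bigD1 j) //= big1 => [|i /negbTE ij]; rewrite mxE ?ij /=.
  by rewrite !eqxx expr1n expr0n !addr0.
by rewrite expr0n addr0.
Qed.

Lemma vnorm_sqnorm k (x : 'cV[C]_k) : vnorm x = Num.sqrt (sqnorm x).
Proof.
rewrite /vnorm sqnormE; congr Num.sqrt; apply: eq_bigr => i _.
by case: (x i 0) => a b /=; rewrite sqr_sqrtr // addr_ge0 ?sqr_ge0.
Qed.

Lemma dotmx_cdot k (x y : 'cV[C]_k) : dotmx y^T x^T = cdot x y.
Proof. by rewrite dotmxE /cdot !mxE; apply: eq_bigr => i _; rewrite !mxE mulrC. Qed.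

Lemma cauchy_schwarz k (x y : 'cV[C]_k) :
  complex.Re (cdot x y) ^+ 2 <= sqnorm x * sqnorm y.
Proof.
have := leif_le (CauchySchwarz (@dotmx C k) y^T x^T).
rewrite /= !dotmx_cdot.
have cdot_real (u : 'cV[C]_k) : cdot u u = (sqnorm u)%:C%C.
  by rewrite /sqnorm RRe_real // -dotmx_cdot ger0_real // dnorm_ge0.
rewrite !cdot_real -rmorphM /= [sqnorm y * _]mulrC -lecR => /(le_trans _); apply.
rewrite normc_def -rmorphXn lecR sqr_sqrtr ?addr_ge0 ?sqr_ge0 //.
by rewrite lerDl sqr_ge0.
Qed.

Lemma cauchy_schwarz_unit k (x y : 'cV[C]_k) :
  sqnorm x = 1 -> `|complex.Re (cdot x y)| <= vnorm y.
Proof.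
move=> x1; rewrite vnorm_sqnorm -sqrtr_sqr ler_sqrt ?sqnorm_ge0 //.
by rewrite -[sqnorm y]mul1r -x1 cauchy_schwarz.
Qed.

Lemma qformD k (M N : 'M[C]_k) x : qform (M + N) x = qform M x + qform N x.
Proof. by rewrite /qform /cdot mulmxDl mulmxDr mxE raddfD. Qed.

Lemma qform0 k (x : 'cV[C]_k) : qform 0 x = 0.
Proof. by rewrite /qform /cdot mul0mx mulmx0 mxE. Qed.

Lemma qform_sum k (I : finType) (P : pred I) (F : I -> 'M[C]_k) x :
  qform (\sum_(i | P i) F i) x = \sum_(i | P i) qform (F i) x.
Proof. exact: (big_morph (fun M => qform M x) (fun M N => qformD M N x) (qform0 x)). Qed.

Lemma qform_vec0 k (M : 'M[C]_k) : qform M 0 = 0.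
Proof. by rewrite /qform /cdot mxadj0 mul0mx mxE. Qed.

Lemma qform_adjmul k l (N : 'M[C]_(l, k)) x : qform (mxadj N *m N) x = sqnorm (N *m x).
Proof. by rewrite /qform -mulmxA cdot_adjmul. Qed.

Lemma sqnorm_qform1 k (x : 'cV[C]_k) : sqnorm x = qform 1%:M x.
Proof. by rewrite /qform mul1mx. Qed.

(* A vector of C^k (x) C^p seen as the family of its p slices in C^k. *)
Definition slice k p (x : 'cV[C]_(k * p)) (b : 'I_p) : 'cV[C]_k :=
  \col_a x (mxtens_index (a, b)) 0.

Definition glue k p (f : 'I_p -> 'cV[C]_k) : 'cV[C]_(k * p) :=
  \col_i f (mxtens_unindex i).2 (mxtens_unindex i).1 0.

Lemma slice_glue k p (f : 'I_p -> 'cV[C]_k) b : slice (glue f) b = f b.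
Proof. by apply/matrixP => a j; rewrite [j]ord1 !mxE mxtens_indexK. Qed.

Lemma cdot_tens k p (M : 'M[C]_k) (D : 'M[C]_p) (x y : 'cV[C]_(k * p)) :
  cdot x ((M *t D) *m y) = \sum_b \sum_b' D b b' * cdot (slice x b) (M *m slice y b').
Proof.
transitivity (\sum_(b < p) \sum_(b' < p) \sum_(a < k) \sum_(c < k)
   (conjc (x (mxtens_index (a, b)) 0) * M a c * D b b' * y (mxtens_index (c, b')) 0)).
  rewrite cdotE sum_mxtens exchange_big /=; apply: eq_bigr => b _.
  rewrite [RHS]exchange_big /=; apply: eq_bigr => a _.
  rewrite mxE sum_mxtens mulr_sumr exchange_big /=; apply: eq_bigr => b' _.
  by rewrite mulr_sumr; apply: eq_bigr => c _; rewrite tensmxE; ring.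
apply: eq_bigr => b _; apply: eq_bigr => b' _.
rewrite cdotE mulr_sumr; apply: eq_bigr => a _.
rewrite !mxE !mulr_sumr; apply: eq_bigr => c _.
by rewrite !mxE; ring.
Qed.

Lemma qform_tens k p (M : 'M[C]_k) (D : 'M[C]_p) x :
  qform (M *t D) x =
  \sum_b \sum_b' complex.Re (D b b' * cdot (slice x b) (M *m slice x b')).
Proof. by rewrite /qform cdot_tens raddf_sum; apply: eq_bigr => b _; rewrite raddf_sum. Qed.

Lemma qform_tens_proj k p (M : 'M[C]_k) (S : pred 'I_p) (D : 'M[C]_p) x :
  (forall b b', D b b' = ((b == b') && S b)%:R) ->
  qform (M *t D) x = \sum_(b | S b) qform M (slice x b).
Proof.
move=> DE; rewrite qform_tens [RHS]big_mkcond /=; apply: eq_bigr => b _.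
rewrite (bigD1 b) //= big1 => [|b' /negbTE nbb']; last first.
  by rewrite DE eq_sym nbb' mul0r.
by rewrite DE eqxx addr0; case: (S b); rewrite /= ?mul1r ?mul0r.
Qed.

Lemma qform_tens1 k p (M : 'M[C]_k) x :
  qform (M *t (1%:M : 'M_p)) x = \sum_b qform M (slice x b).
Proof. by apply: qform_tens_proj => b b'; rewrite mxE andbT. Qed.

Lemma sqnorm_tens k p (x : 'cV[C]_(k * p)) : sqnorm x = \sum_b sqnorm (slice x b).
Proof.
rewrite sqnorm_qform1 -tensmx11 qform_tens1.
by apply: eq_bigr => b _; rewrite -sqnorm_qform1.
Qed.

Lemma qform_tens_delta k p (M : 'M[C]_k) (j : 'I_p) x :
  qform (M *t delta_mx j j) x = qform M (slice x j).
Proof.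
rewrite (@qform_tens_proj _ _ _ (pred1 j)) ?big_pred1_eq // => b b'.
rewrite mxE /=; have [->|_] := eqVneq b j; last by rewrite andbF.
by rewrite andbT eq_sym.
Qed.

Lemma projP_entry m (b b' : 'I_(m + m)) : projP R m b b' = ((b == b') && (b < m)%N)%:R.
Proof.
case: (split_ordP b) => i ->; case: (split_ordP b') => j ->; rewrite /projP ?andbT ?andbF.
- by rewrite block_mxEul mxE eq_lshift.
- by rewrite block_mxEur mxE eq_lrshift.
- by rewrite block_mxEdl mxE.
- by rewrite block_mxEdr mxE.
Qed.

Lemma projQ_entry m (b b' : 'I_(m + m)) :
  projQ R m b b' = ((b == b') && ~~ (b < m)%N)%:R.
Proof.
case: (split_ordP b) => i ->; case: (split_ordP b') => j ->; rewrite /projQ ?andbT ?andbF.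
- by rewrite block_mxEul mxE.
- by rewrite block_mxEur mxE.
- by rewrite block_mxEdl mxE eq_rlshift.
- by rewrite block_mxEdr mxE eq_rshift.
Qed.

Lemma qform_tensP k m (M : 'M[C]_k) x :
  qform (M *t projP R m) x = \sum_(b < m) qform M (slice x (lshift m b)).
Proof.
rewrite (qform_tens_proj _ _ (@projP_entry m)) big_split_ord /=.
rewrite [X in _ + X]big_pred0 ?addr0 => [|b]; last by rewrite ltnNge leq_addr.
by apply: eq_bigl => b; rewrite ltn_ord.
Qed.

Lemma qform_tensQ k m (M : 'M[C]_k) x :
  qform (M *t projQ R m) x = \sum_(b < m) qform M (slice x (rshift m b)).
Proof.
rewrite (qform_tens_proj _ _ (@projQ_entry m)) big_split_ord /=.
rewrite [X in X + _]big_pred0 ?add0r => [|b]; last by rewrite ltn_ord.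
by apply: eq_bigl => b; rewrite ltnNge leq_addr.
Qed.

Section Spectral.
Variables (k : nat) (M : 'M[C]_k).
Hypotheses (M_herm : mxadj M = M) (k_gt0 : (0 < k)%N).

Let P := spectralmx M.
Let d := spectral_diag M.

Let P_unitary : P *m mxadj P = 1%:M.
Proof. by rewrite mxadjE_conj; apply/unitarymxP/spectral_unitarymx. Qed.

Let P_isometry : mxadj P *m P = 1%:M.
Proof.
by have := mulmxKtV (1%:M : 'M[C]_k) (spectral_unitarymx M) erefl; rewrite mul1mx -mxadjE_conj.
Qed.

Let M_spectral : M = mxadj P *m diag_mx d *m P.
Proof.
rewrite mxadjE_conj -invmx_unitary ?spectral_unitarymx //.
apply/orthomx_spectralP/normalmxP.
by rewrite -mxadjE_conj M_herm.
Qed.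

Let w (x : 'cV[C]_k) j :=
  complex.Re ((P *m x) j 0) ^+ 2 + complex.Im ((P *m x) j 0) ^+ 2.

Let w_ge0 x j : 0 <= w x j.
Proof. by rewrite addr_ge0 ?sqr_ge0. Qed.

Let qform_spectral x : qform M x = \sum_j complex.Re (d 0 j) * w x j.
Proof.
rewrite /qform M_spectral -!mulmxA cdot_adjmul cdotE raddf_sum; apply: eq_bigr => j _.
by rewrite mul_diag_mx /w; move: (P *m x) => y; rewrite mxE; case: (d 0 j) (y j 0) => [a b] [c e] /=; ring.
Qed.

Let sqnorm_spectral x : sqnorm x = \sum_j w x j.
Proof.
rewrite /sqnorm -{2}(mul1mx x) -P_isometry -mulmxA cdot_adjmul.
exact: sqnormE.
Qed.

Let jmin := [arg min_(j < Ordinal k_gt0) complex.Re (d 0 j)]%O.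
Let dmin := complex.Re (d 0 jmin).

Let dmin_le j : dmin <= complex.Re (d 0 j).
Proof. by rewrite /dmin /jmin; case: arg_minP => // i _; apply. Qed.

Let dmin_le_qform x : dmin * sqnorm x <= qform M x.
Proof.
rewrite qform_spectral sqnorm_spectral mulr_sumr.
by apply: ler_sum => j _; exact: (ler_wpM2r (w_ge0 x j) (dmin_le j)).
Qed.

Let dmin_eigenvalue : eigenvalue M (dmin%:C)%C.
Proof.
have d_real : d 0 jmin = (dmin%:C)%C.
  have M_hermsym : M \is hermsymmx.
    by apply/is_hermitianmxP; rewrite expr0 scale1r -mxadjE_conj M_herm.
  by have /mxOverP /(_ 0 jmin) /RRe_real := hermitian_spectral_diag_real M_hermsym.
apply/eigenvalueP; exists (delta_mx 0 jmin *m P).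
  rewrite M_spectral !mulmxA -(mulmxA _ P) P_unitary mulmx1 -d_real scalemxAl.
  congr (_ *m _); apply/matrixP => i0 j; rewrite [i0]ord1 mul_mx_diag !mxE.
  by have [->|] := eqVneq j jmin; rewrite /= ?mulr1 ?mul1r ?mulr0 ?mul0r.
apply/eqP => /(congr1 (mulmx^~ (mxadj P))).
rewrite -mulmxA P_unitary mulmx1 mul0mx => /matrixP /(_ 0 jmin).
by rewrite !mxE !eqxx /= => /eqP; rewrite oner_eq0.
Qed.

Let eigenvalue_ge_dmin r : eigenvalue M (r%:C)%C -> dmin <= r.
Proof.
move=> /eigenvalueP [v vM v_neq0].
have Mx : M *m mxadj v = (r%:C)%C *: mxadj v.
  by rewrite -{1}M_herm -mxadjM vM mxadjZ conjc_real.
have x_gt0 : 0 < sqnorm (mxadj v).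
  rewrite lt_def sqnorm_ge0 andbT; apply/eqP => /sqnorm_eq0 v0.
  by move: v_neq0; rewrite -(mxadjK v) v0 mxadj0 eqxx.
have := dmin_le_qform (mxadj v).
rewrite /qform Mx cdotZr.
have -> : complex.Re ((r%:C)%C * cdot (mxadj v) (mxadj v)) = r * sqnorm (mxadj v).
  by rewrite /sqnorm; case: (cdot _ _) => a b /=; ring.
by rewrite ler_pM2r.
Qed.

Let lambda_min_spectral : lambda_min M = dmin.
Proof.
apply/eqP; rewrite eq_le; apply/andP; split.
  by apply: ge_inf dmin_eigenvalue; exists dmin => r /eigenvalue_ge_dmin.
by apply: lb_le_inf; [exists dmin | move=> r /eigenvalue_ge_dmin].
Qed.

Lemma lambda_min_le_qform x : lambda_min M * sqnorm x <= qform M x.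
Proof. by rewrite lambda_min_spectral. Qed.

Lemma lambda_min_attained : exists x, sqnorm x = 1 /\ qform M x = lambda_min M.
Proof.
exists (mxadj P *m delta_mx jmin 0).
have wE j : w (mxadj P *m delta_mx jmin 0) j = (j == jmin)%:R.
  rewrite /w mulmxA P_unitary mul1mx mxE.
  by case: eqP; rewrite /= ?expr1n expr0n addr0.
split.
  rewrite sqnorm_spectral (bigD1 jmin) //= wE eqxx big1 ?addr0 // => j /negbTE ij.
  by rewrite wE ij.
rewrite qform_spectral lambda_min_spectral (bigD1 jmin) //= wE eqxx mulr1.
by rewrite big1 ?addr0 // => j /negbTE ij; rewrite wE ij mulr0.
Qed.

Lemma qform_bounded : exists K, forall x, qform M x <= K * sqnorm x.
Proof.
pose jmax := [arg max_(j > Ordinal k_gt0) complex.Re (d 0 j)]%O.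
exists (complex.Re (d 0 jmax)) => x.
rewrite qform_spectral sqnorm_spectral mulr_sumr; apply: ler_sum => j _.
apply: (ler_wpM2r (w_ge0 x j)).
by rewrite /jmax; case: arg_maxP => // i _; apply.
Qed.

End Spectral.

Lemma opnorm_ubound k l (M : 'M[C]_(k, l)) :
  has_ubound [set vnorm (M *m x) | x in [set x : 'cV[C]_l | vnorm x = 1]].
Proof.
case: l M => [|l] M.
  exists 0 => r /= [x]; rewrite vnorm_sqnorm sqnormE big_ord0 sqrtr0 => /esym/eqP.
  by rewrite oner_eq0.
have MM_herm : mxadj (mxadj M *m M) = mxadj M *m M by rewrite mxadjM mxadjK.
have [K MM_le] := qform_bounded MM_herm (ltn0Sn l).
exists (Num.sqrt K) => r /= [x x1 <-].
have {}x1 : sqnorm x = 1 by rewrite -[LHS]sqr_sqrtr ?sqnorm_ge0 // -vnorm_sqnorm x1 expr1n.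
have := MM_le x; rewrite qform_adjmul x1 mulr1 => MxK.
by rewrite vnorm_sqnorm ler_sqrt // (le_trans (sqnorm_ge0 _) MxK).
Qed.

Lemma opnorm_ge k l (M : 'M[C]_(k, l)) x : sqnorm x = 1 -> vnorm (M *m x) <= opnorm M.
Proof.
move=> x1; apply: (ub_le_sup (opnorm_ubound M)).
by exists x => //=; rewrite vnorm_sqnorm x1 sqrtr1.
Qed.

Lemma opnorm_ge0 k l (M : 'M[C]_(k, l)) : (0 < l)%N -> 0 <= opnorm M.
Proof.
move=> l_gt0; apply: le_trans (opnorm_ge M (sqnorm_delta (Ordinal l_gt0))).
by rewrite vnorm_sqnorm sqrtr_ge0.
Qed.

Lemma qform_le_opnorm k (M : 'M[C]_k) x : sqnorm x = 1 -> `|qform M x| <= opnorm M.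
Proof. by move=> x1; apply: le_trans (cauchy_schwarz_unit _ x1) (opnorm_ge M x1). Qed.

Lemma sqnorm_mul_le k l (M : 'M[C]_(k, l)) u : (0 < l)%N ->
  sqnorm (M *m u) <= opnorm M ^+ 2 * sqnorm u.
Proof.
move=> l_gt0; have [->|u_neq0] := eqVneq u 0; first by rewrite mulmx0 !sqnorm0 mulr0.
have u_gt0 : 0 < sqnorm u.
  by rewrite lt_def sqnorm_ge0 andbT; apply: contraNneq u_neq0 => /sqnorm_eq0 ->.
set s := Num.sqrt (sqnorm u).
have s_gt0 : 0 < s by rewrite sqrtr_gt0.
have s2 : s ^+ 2 = sqnorm u by rewrite sqr_sqrtr // ltW.
have u1 : sqnorm (((s^-1)%:C)%C *: u) = 1 by rewrite sqnormZ exprVn s2 mulVf // gt_eqF.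
have := opnorm_ge M u1; rewrite vnorm_sqnorm -scalemxAr sqnormZ exprVn s2.
rewrite -(ler_sqr (sqrtr_ge0 _) (opnorm_ge0 M l_gt0)) sqr_sqrtr; last first.
  by rewrite mulr_ge0 ?invr_ge0 ?sqnorm_ge0.
by rewrite ler_pdivrMl // mulrC.
Qed.

Lemma qform_tens_unitary k p (M : 'M[C]_k) (G : 'M[C]_p) x : (0 < k)%N ->
  mxadj G *m G = 1%:M -> sqnorm x = 1 -> `|qform (M *t G) x| <= opnorm M.
Proof.
move=> k_gt0 G_unitary x1.
set y := (1%:M *t G) *m x.
have y1 : sqnorm y = 1.
  by rewrite -qform_adjmul mxadj_tens mxadj1 tensmx_mul mul1mx G_unitary tensmx11 -sqnorm_qform1.
apply: le_trans (cauchy_schwarz_unit _ x1) _.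
have -> : (M *t G) *m x = (M *t 1%:M) *m y by rewrite mulmxA tensmx_mul mulmx1 mul1mx.
rewrite vnorm_sqnorm -(ger0_norm (opnorm_ge0 M k_gt0)) -sqrtr_sqr ler_sqrt ?sqr_ge0 //.
rewrite -qform_adjmul mxadj_tens mxadj1 tensmx_mul mul1mx qform_tens1.
rewrite -[X in _ <= X]mulr1 -y1 sqnorm_tens mulr_sumr; apply: ler_sum => b _.
by rewrite qform_adjmul sqnorm_mul_le.
Qed.

Section Projections.
Variable m : nat.
Local Notation P := (projP R m).
Local Notation Q := (projQ R m).

Lemma projP_herm : mxadj P = P.
Proof. by rewrite /projP mxadj_block mxadj1 mxadj0. Qed.

Lemma projQ_herm : mxadj Q = Q.
Proof. by rewrite /projQ mxadj_block mxadj1 mxadj0. Qed.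

Lemma projP_idem : P *m P = P.
Proof. by rewrite /projP mulmx_block !mulmx0 !mul0mx !addr0 mulmx1. Qed.

Lemma projQ_idem : Q *m Q = Q.
Proof. by rewrite /projQ mulmx_block !mulmx0 !mul0mx !add0r mulmx1. Qed.

Lemma projPQ : P *m Q = 0.
Proof. by rewrite /projP /projQ mulmx_block !mulmx0 !mul0mx !addr0 block_mx0. Qed.

Lemma projQP : Q *m P = 0.
Proof. by rewrite /projP /projQ mulmx_block !mulmx0 !mul0mx !addr0 block_mx0. Qed.

Lemma projPQ1 : P + Q = 1%:M.
Proof. by rewrite /projP /projQ add_block_mx !addr0 !add0r -scalar_mx_block. Qed.

End Projections.

Lemma lambda_min_perturb k (X Y : 'M[C]_k) (l s : R) :
  (0 < k)%N -> mxadj X = X ->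
  (forall x, l * sqnorm x <= qform Y x) ->
  (exists2 y, sqnorm y = 1 & qform Y y = l) ->
  (forall x, sqnorm x = 1 -> `|qform X x - qform Y x| <= s) ->
  `|lambda_min X - l| <= s.
Proof.
move=> k_gt0 X_herm Y_ge [y y1 Yy] XY.
have [x [x1 Xx]] := lambda_min_attained X_herm k_gt0.
have := lambda_min_le_qform X_herm k_gt0 y; rewrite y1 mulr1 => Xy.
have := Y_ge x; rewrite x1 mulr1 => Yx.
move: (XY x x1) (XY y y1); rewrite !ler_norml => /andP[? ?] /andP[? ?].
apply/andP; split; lra.
Qed.

Lemma sqnorm_split k m (x : 'cV[C]_(k * (m + m))) :
  sqnorm x = \sum_(b < m) sqnorm (slice x (lshift m b)) + \sum_(b < m) sqnorm (slice x (rshift m b)).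
Proof. by rewrite sqnorm_tens big_split_ord. Qed.

Lemma sqnorm_split2 k (z : 'cV[C]_(k * 2)) : sqnorm z = sqnorm (slice z 0) + sqnorm (slice z 1).
Proof.
rewrite sqnorm_tens big_ord_recl big_ord1.
by congr (sqnorm (slice _ _) + sqnorm (slice _ _)); apply/val_inj.
Qed.

Lemma qform_diag2 k (M N : 'M[C]_k) z :
  qform (M *t (delta_mx 0 0 : 'M[C]_2) + N *t delta_mx 1 1) z = qform M (slice z 0) + qform N (slice z 1).
Proof. by rewrite qformD !qform_tens_delta. Qed.

Lemma qform_projPQ k m (M N : 'M[C]_k) x :
  qform (M *t projP R m + N *t projQ R m) x =
  \sum_(b < m) qform M (slice x (lshift m b)) + \sum_(b < m) qform N (slice x (rshift m b)).
Proof. by rewrite qformD qform_tensP qform_tensQ. Qed.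

Lemma projPQ_lower k m (M N : 'M[C]_k) l :
  (forall z, l * sqnorm z <= qform (M *t (delta_mx 0 0 : 'M[C]_2) + N *t delta_mx 1 1) z) ->
  forall x, l * sqnorm x <= qform (M *t projP R m + N *t projQ R m) x.
Proof.
move=> lower x; rewrite qform_projPQ sqnorm_split mulrDr !mulr_sumr.
apply: lerD; apply: ler_sum => b _.
  have := lower (glue (fun c : 'I_2 => if c == 0 then slice x (lshift m b) else 0)).
  by rewrite qform_diag2 sqnorm_split2 !slice_glue /= sqnorm0 qform_vec0 !addr0.
have := lower (glue (fun c : 'I_2 => if c == 0 then 0 else slice x (rshift m b))).
by rewrite qform_diag2 sqnorm_split2 !slice_glue /= sqnorm0 qform_vec0 !add0r.
Qed.

Lemma projPQ_attained k m (M N : 'M[C]_k) z : (0 < m)%N -> sqnorm z = 1 ->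
  exists2 x, sqnorm x = 1 &
    qform (M *t projP R m + N *t projQ R m) x = qform (M *t (delta_mx 0 0 : 'M[C]_2) + N *t delta_mx 1 1) z.
Proof.
move=> m_gt0 z1; pose o := Ordinal m_gt0.
exists (glue (fun c : 'I_(m + m) => if c == lshift m o then slice z 0
                                   else if c == rshift m o then slice z 1 else 0)).
  rewrite sqnorm_split -z1 sqnorm_split2 (bigD1 o) //= (bigD1 o (P := xpredT)) //=.
  rewrite !slice_glue !eqxx eq_rlshift !big1 ?addr0 // => b /negbTE ob.
    by rewrite slice_glue eq_rshift ob eq_rlshift sqnorm0.
  by rewrite slice_glue eq_lshift ob eq_lrshift sqnorm0.
rewrite qform_projPQ qform_diag2 (bigD1 o) //= (bigD1 o (P := xpredT)) //=.
rewrite !slice_glue !eqxx eq_rlshift !big1 ?addr0 // => b /negbTE ob.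
  by rewrite slice_glue eq_rshift ob eq_rlshift qform_vec0.
by rewrite slice_glue eq_lshift ob eq_lrshift qform_vec0.
Qed.

Section Clifford.
Variables (n d m : nat) (Gamma : 'I_d -> 'M[C]_(m + m)).
Hypothesis Gamma_clifford : is_clifford Gamma.

Lemma clifford_sqr (a : 'I_d -> 'M[C]_n) :
  (\sum_i (a i *t Gamma i)) *m (\sum_i (a i *t Gamma i)) =
  (\sum_i (a i *m a i)) *t 1%:M
  + \sum_(k < d) \sum_(l < d | (k < l)%N) ((a k *m a l - a l *m a k) *t (Gamma k *m Gamma l)).
Proof.
have [_ [Gamma_sqr Gamma_anti]] := Gamma_clifford.
have -> : (\sum_i (a i *t Gamma i)) *m (\sum_i (a i *t Gamma i)) =
    \sum_i \sum_j ((a i *m a j) *t (Gamma i *m Gamma j)).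
  rewrite mulmx_suml; apply: eq_bigr => i _; rewrite mulmx_sumr.
  by apply: eq_bigr => j _; rewrite tensmx_mul.
rewrite sumr_diag_pairs tensmx_suml; congr (_ + _).
  by apply: eq_bigr => i _; rewrite Gamma_sqr.
apply: eq_bigr => k _; apply: eq_bigr => l kl.
have lk : l != k by rewrite neq_ltn kl orbT.
by rewrite (Gamma_anti _ _ lk) tensmxNr -tensmxNl -tensmxDl.
Qed.

Lemma clifford_prod_unitary k l : mxadj (Gamma k *m Gamma l) *m (Gamma k *m Gamma l) = 1%:M.
Proof.
have [Gamma_herm [Gamma_sqr _]] := Gamma_clifford.
by rewrite mxadjM !Gamma_herm -mulmxA (mulmxA (Gamma k)) Gamma_sqr mul1mx Gamma_sqr.
Qed.

Lemma qform_clifford_commutators_le (A : 'I_d -> 'M[C]_n) x : (0 < n)%N ->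
  sqnorm x = 1 ->
  `|qform (\sum_(k < d) \sum_(l < d | (k < l)%N)
             ((A k *m A l - A l *m A k) *t (Gamma k *m Gamma l))) x|
  <= \sum_(k < d) \sum_(l < d | (k < l)%N) opnorm (A k *m A l - A l *m A k).
Proof.
move=> n_gt0 x1; rewrite qform_sum; apply: le_trans (ler_norm_sum _ _ _) _.
apply: ler_sum => k _; rewrite qform_sum; apply: le_trans (ler_norm_sum _ _ _) _.
by apply: ler_sum => l _; apply: qform_tens_unitary => //; apply: clifford_prod_unitary.
Qed.

End Clifford.

Section Localizer.
Variables (n d m : nat) (Gamma : 'I_d -> 'M[C]_(m + m)).
Variables (A : 'I_d -> 'M[C]_n) (B : 'M[C]_n) (lam : 'I_d -> R) (nu : C).
Hypotheses (Gamma_clifford : is_clifford Gamma) (A_herm : forall i, is_hermitian (A i)).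
Local Notation a := (shiftA A lam).
Local Notation b := (shiftB B nu).
Local Notation P := (projP R m).
Local Notation Q := (projQ R m).

Lemma shiftA_herm i : mxadj (a i) = a i.
Proof. by rewrite /shiftA mxadjB A_herm mxadj_scalar conjc_real. Qed.

Let S := \sum_i (a i *t Gamma i).
Let T := b *t P - mxadj b *t Q.

Let S_herm : mxadj S = S.
Proof.
have [Gamma_herm _] := Gamma_clifford.
by rewrite mxadj_sum; apply: eq_bigr => i _; rewrite mxadj_tens shiftA_herm Gamma_herm.
Qed.

Let T_adj : mxadj T = mxadj b *t P - b *t Q.
Proof. by rewrite mxadjB !mxadj_tens mxadjK projP_herm projQ_herm. Qed.

Let T_sqr : mxadj T *m T = (mxadj b *m b) *t P + (b *m mxadj b) *t Q.
Proof.
rewrite T_adj /T; move: (shiftB B nu) => c.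
rewrite mulmxBl !mulmxBr !tensmx_mul projP_idem projQ_idem projPQ projQP.
by rewrite !tensmx0 subr0 sub0r opprK.
Qed.

Let Fmat_ST : Fmat Gamma A B lam nu = S *m T + mxadj (S *m T).
Proof.
have ST : S *m T = \sum_i ((a i *m b) *t (Gamma i *m P))
                   - \sum_i ((a i *m mxadj b) *t (Gamma i *m Q)).
  by rewrite /S /T mulmx_suml -sumrB; apply: eq_bigr => i _; rewrite mulmxBr !tensmx_mul.
rewrite ST /Fmat /=; move: (shiftB B nu) => c.
by rewrite mxadjB !mxadj_sum !big_split /= opprD addrACA.
Qed.

Lemma localizer_sqr :
  mxadj (localizer Gamma A B lam nu) *m localizer Gamma A B lam nu =
  (RQ A B lam nu *t P + LQ A B lam nu *t Q)
  + \sum_(k < d) \sum_(l < d | (k < l)%N) ((A k *m A l - A l *m A k) *t (Gamma k *m Gamma l))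
  + Fmat Gamma A B lam nu.
Proof.
have -> : localizer Gamma A B lam nu = S + T by rewrite /localizer addrA.
have SS_TT : S *m S + mxadj T *m T = RQ A B lam nu *t P + LQ A B lam nu *t Q
   + \sum_(k < d) \sum_(l < d | (k < l)%N)
       ((A k *m A l - A l *m A k) *t (Gamma k *m Gamma l)).
  rewrite clifford_sqr // T_sqr -projPQ1 tensmxDr /RQ /LQ !tensmxDl.
  rewrite addrAC addrACA; congr (_ + _).
  apply: eq_bigr => k _; apply: eq_bigr => l _.
  by rewrite /shiftA commutator_shiftl commutator_shiftr.
rewrite mxadjD S_herm mulmxDl (mulmxDr S) (mulmxDr (mxadj T)) Fmat_ST mxadjM S_herm.
by rewrite [mxadj T *m S + _]addrC addrACA SS_TT.
Qed.

Lemma RQ_herm : mxadj (RQ A B lam nu) = RQ A B lam nu.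
Proof.
rewrite /RQ mxadjD mxadj_sum mxadjM mxadjK.
by congr (_ + _); apply: eq_bigr => i _; rewrite mxadjM shiftA_herm.
Qed.

Lemma LQ_herm : mxadj (LQ A B lam nu) = LQ A B lam nu.
Proof.
rewrite /LQ mxadjD mxadj_sum mxadjM mxadjK.
by congr (_ + _); apply: eq_bigr => i _; rewrite mxadjM shiftA_herm.
Qed.

Lemma Qmat_herm : mxadj (Qmat A B lam nu) = Qmat A B lam nu.
Proof. by rewrite /Qmat mxadjD !mxadj_tens !mxadj_delta RQ_herm LQ_herm. Qed.

End Localizer.

End ComplexMatrices.

Theorem mainTheorem12 (R : realType) (n d m : nat)
  (Gamma : 'I_d -> 'M[R[i]]_(m + m)) (A : 'I_d -> 'M[R[i]]_n)
  (B : 'M[R[i]]_n) (lam : 'I_d -> R) (nu : R[i]) :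
  (0 < n)%N -> (0 < d)%N -> (0 < m)%N ->
  is_clifford Gamma ->
  (forall i, is_hermitian (A i)) ->
  `| clifford_gap Gamma A B lam nu - quadratic_gap A B lam nu |
    <= Num.sqrt (\sum_(k < d) \sum_(l < d | (k < l)%N)
                   opnorm (A k *m A l - A l *m A k)
                 + opnorm (Fmat Gamma A B lam nu)).
Proof.
move=> n_gt0 _ m_gt0 Gamma_clifford A_herm.
have Q_herm := Qmat_herm B lam nu A_herm.
have n2_gt0 : (0 < n * 2)%N by rewrite muln_gt0 n_gt0.
have [z [z1 Qz]] := lambda_min_attained Q_herm n2_gt0.
apply: ler_norm_sqrtrB; apply: lambda_min_perturb.
- by rewrite muln_gt0 n_gt0 addn_gt0 m_gt0.
- by rewrite mxadjM mxadjK.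
- exact/projPQ_lower/(lambda_min_le_qform Q_herm).
- by rewrite -Qz; apply: projPQ_attained.
move=> x x1; rewrite localizer_sqr //.
set Y := _ *t projP R m + _; rewrite qformD (qformD Y) addrC -addrA addKr.
apply: le_trans (ler_normD _ _) _; apply: lerD; last exact: qform_le_opnorm.
exact: qform_clifford_commutators_le.
Qed.
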